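(* Let $\alpha>-1$, $0\le\gamma<2+\alpha$, $\beta\in\{0,1/3\}$, and let $\sigma$ be a weight on $\mathcal H$. There is a constant $C>0$ (independent of $f$ and $\lambda$) such that for every $f$ and every $\lambda>0$, $$|\{z\in\mathcal H:\mathcal M^{d,\beta}_{\sigma,\alpha,\gamma}f(z)>\lambda\}|_{\sigma,\alpha}\le C\left(\frac1\lambda\int_{\mathcal H}|f|\sigma\,dV_\alpha\right)^{\frac{2+\alpha}{2+\alpha-\gamma}}.$$
   Context: $\mathcal H=\{x+iy:x\in\mathbb R,\ y>0\}$; for $\alpha>-1$, $dV_\alpha(x+iy)=y^\alpha dx\,dy$. A weight is a nonnegative locally integrable function; $|E|_{\sigma,\alpha}=\int_E\sigma dV_\alpha$. For an interval $I$, $Q_I=\{x+iy:x\in I,0<y<|I|\}$. For $\beta\in\{0,1/3\}$, the dyadic grid is $\mathcal D^\beta=\{2^j([0,1)+m+(-1)^j\beta): m\in\mathbb Z, j\in\mathbb Z\}$. The dyadic weighted fractional maximal function is $\mathcal M^{d,\beta}_{\sigma,\alpha,\gamma}f(z)=\sup_{I\in\mathcal D^\beta,\ z\in Q_I}\frac{1}{|Q_I|_{\sigma,\alpha}^{1-\frac{\gamma}{2+\alpha}}}\int_{Q_I}|f|\sigma\,dV_\alpha$. *)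

From HB Require Import structures.
From mathcomp Require Import all_boot all_order all_algebra.
From mathcomp Require Import all_classical all_reals all_analysis.
Set Implicit Arguments. Unset Strict Implicit. Unset Printing Implicit Defensive.
Import Order.TTheory GRing.Theory Num.Theory.
Import numFieldNormedType.Exports.
Local Open Scope classical_set_scope.
Local Open Scope ring_scope.

Section Defs.
Variable R : realType.

Definition leb2 := (@lebesgue_measure R \x @lebesgue_measure R)%E.

(* The upper half-plane H = {x + i y : y > 0}, points as pairs (x, y). *)
Definition Hplane : set (R * R) := [set z | 0 < z.2].

(* int_E g sigma dV_alpha, with dV_alpha(x+iy) = y^alpha dx dy. *)
Definition wint (alpha : R) (sigma : R * R -> R) (E : set (R * R))
  (g : R * R -> R) : \bar R :=
  (\int[leb2]_(z in E) (g z * sigma z * z.2 `^ alpha)%:E)%E.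

Definition wmeas (alpha : R) (sigma : R * R -> R) (E : set (R * R)) : \bar R :=
  wint alpha sigma E (fun _ => 1).

Definition weight (sigma : R * R -> R) : Prop :=
  [/\ measurable_fun Hplane sigma,
      (forall z, Hplane z -> 0 <= sigma z) &
      (forall K : set (R * R), compact K -> K `<=` Hplane ->
         (\int[leb2]_(z in K) (sigma z)%:E < +oo)%E)].

(* The dyadic interval I = 2^j([0,1) + m + (-1)^j beta) of D^beta,
   with j, m integers; its length is |I| = 2^j. *)
Definition dyadic_left (beta : R) (j m : int) : R :=
  (2%:R ^ j) * (m%:~R + (-1) ^ j * beta).
Definition dyadic_len (j : int) : R := 2%:R ^ j.
Definition dyadic_int (beta : R) (j m : int) : set R :=
  [set x | dyadic_left beta j m <= x < dyadic_left beta j m + dyadic_len j].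

Definition Qbox (beta : R) (j m : int) : set (R * R) :=
  [set z | dyadic_int beta j m z.1 /\ 0 < z.2 < dyadic_len j].

(* The averaged quantity |Q_I|^{-(1 - gamma/(2+alpha))} int_{Q_I} |f| sigma dV_alpha,
   with the convention that it is 0 when |Q_I|_{sigma,alpha} is 0 or +oo. *)
Definition frac_avg (alpha gamma : R) (sigma f : R * R -> R)
  (Q : set (R * R)) : \bar R :=
  let mQ := wmeas alpha sigma Q in
  if (mQ == 0%E) || (mQ == +oo%E) then 0%E
  else (wint alpha sigma Q (fun z => `|f z|%R) *
        ((fine mQ) `^ (- (1 - gamma / (2 + alpha))))%:E)%E.

Definition dyadic_max (beta alpha gamma : R) (sigma f : R * R -> R)
  (z : R * R) : \bar R :=
  ereal_sup [set frac_avg alpha gamma sigma f (Qbox beta jm.1 jm.2)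
            | jm in [set jm : int * int | Qbox beta jm.1 jm.2 z]].

End Defs.

(* Set p = (2 + alpha) / (2 + alpha - gamma) >= 1 and A = int_H |f| sigma dV_alpha.
   Call a dyadic box Q good when its fractional average exceeds lambda.  This
   forces 0 < |Q| < +oo and |Q| < (int_Q |f| / lambda)^p, which is at most
   (A / lambda)^(p-1) int_Q |f| / lambda.  As 3 beta is an integer, D^beta is
   nested, so among the good boxes of side at most 2^N the maximal ones are
   pairwise disjoint and cover all the others; summing over them bounds the
   measure of their union by (A / lambda)^p.  These unions increase to the
   level set, so the estimate holds with C = 1. *)

From HB Require Import structures.
From mathcomp Require Import all_boot all_order all_algebra.
From mathcomp Require Import all_classical all_reals all_analysis measurable_realfun.
From mathcomp Require Import ring lra zify.
Import Order.TTheory GRing.Theory Num.Theory.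
Import numFieldNormedType.Exports.
Local Open Scope classical_set_scope.
Local Open Scope ring_scope.

Local Notation cube beta jm := (Qbox beta jm.1 jm.2).

Section DyadicGrid.
Context {R : realType} {beta : R}.

Lemma dyadic_len_gt0 (j : int) : 0 < dyadic_len R j.
Proof. exact: exprz_gt0. Qed.

Lemma dyadic_len_le (j k : int) : j <= k -> dyadic_len R j <= dyadic_len R k.
Proof. by move=> jk; apply: ler_weXz2l => //; rewrite ler1n. Qed.

Lemma dyadic_lenS (j : int) : dyadic_len R (j + 1) = 2 * dyadic_len R j.
Proof. by rewrite /dyadic_len expfzDr ?pnatr_eq0 // expr1z mulrC. Qed.

Lemma dyadic_int_uniq [j m n : int] [x : R] :
  dyadic_int beta j m x -> dyadic_int beta j n x -> m = n.
Proof.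
rewrite /dyadic_int /dyadic_left /=; have P0 := dyadic_len_gt0 j.
rewrite /dyadic_len in P0 *; set P := 2%:R ^ j in P0 *.
move=> /andP[xm mx] /andP[xn nx].
have lt_mn1 : (m%:~R : R) < (n + 1)%:~R by rewrite intrD -(ltr_pM2l P0); lra.
have lt_nm1 : (n%:~R : R) < (m + 1)%:~R by rewrite intrD -(ltr_pM2l P0); lra.
move: lt_mn1 lt_nm1; rewrite !ltr_int !ltzD1 => le_mn le_nm.
by apply/eqP; rewrite eq_le le_mn le_nm.
Qed.

(* The grids D^beta are nested because 3 beta is an integer: the parent of an
   interval of length 2^j is found by halving m + 3 (-1)^j beta. *)
Hypothesis beta3_int : exists e : int, 3 * beta = e%:~R.

Lemma dyadic_int_parent (j m : int) :
  exists n, dyadic_int beta j m `<=` dyadic_int beta (j + 1) n.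
Proof.
have P0 := dyadic_len_gt0 j; set P := dyadic_len R j in P0 *.
set s : R := (-1) ^ j.
have [e' he'] : exists e' : int, 3 * s * beta = e'%:~R.
  have [e he] := beta3_int; exists ((-1) ^+ `|j|%N * e).
  by rewrite intrM rmorphXn rmorphN1 -he /s expN1r mulrCA mulrA.
pose t := m + e'; exists (t %/ 2)%Z.
set n := (t %/ 2)%Z; set r := (t %% 2)%Z.
have r01 : 0 <= (r%:~R : R) <= 1.
  rewrite ler0z modz_ge0 //= -[1]/(1%:~R) ler_int -ltzD1; exact: ltz_pmod.
have t_div2 : m%:~R + 3 * s * beta = 2 * n%:~R + r%:~R :> R.
  by rewrite he' -intrD -/t {1}(divz_eq t 2) intrD intrM mulrC.
have left_parent : dyadic_left beta (j + 1) n = dyadic_left beta j m - P * r%:~R.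
  rewrite /dyadic_left expfzDr ?pnatr_eq0 // expfzDr ?oppr_eq0 ?oner_eq0 //.
  rewrite -/P -/s !expr1z.
  have -> : (n%:~R : R) = (m%:~R + 3 * s * beta - r%:~R) / 2 by rewrite t_div2; field.
  by rewrite /P /dyadic_len; field.
have Pr : 0 <= P * r%:~R <= P.
  case/andP: r01 => r0 r1; apply/andP; split.
  - exact: mulr_ge0 (ltW P0) r0.
  - exact: ler_piMr (ltW P0) r1.
move=> x; rewrite /dyadic_int /= left_parent dyadic_lenS -/P => /andP[].
by case/andP: Pr => *; apply/andP; split; lra.
Qed.

Lemma dyadic_int_nested [j k] (m : int) : j <= k ->
  exists n, dyadic_int beta j m `<=` dyadic_int beta k n.
Proof.
move=> jk; have -> : k = j + (`|k - j|%N)%:Z.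
  by rewrite gez0_abs ?subr_ge0 // addrCA subrr addr0.
elim: `|k - j|%N => [|i [n jm_n]]; first by exists m; rewrite addr0.
have [n' n_n'] := dyadic_int_parent (j + i%:Z) n.
by exists n'; rewrite intS addrCA addrC; apply: subset_trans jm_n n_n'.
Qed.

Lemma Qbox_nested [j k m n : int] [z : R * R] : j <= k ->
  Qbox beta j m z -> Qbox beta k n z -> Qbox beta j m `<=` Qbox beta k n.
Proof.
move=> jk [zm _] [zn _]; have [n' jm_n'] := dyadic_int_nested m jk.
have <- := dyadic_int_uniq (jm_n' _ zm) zn.
move=> w [wm /andP[w0 w1]]; split; first exact: jm_n'.
by rewrite w0 /= (lt_le_trans w1) // dyadic_len_le.
Qed.

End DyadicGrid.

Section HalfPlane.
Context {R : realType}.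

Lemma measurable_Hplane : measurable (@Hplane R).
Proof.
have -> : @Hplane R = [set: R] `*` `]0, +oo[%classic.
  by apply/seteqP; split => z /=; rewrite in_itv /= andbT; [move=> h | case].
by apply: measurableX => //; exact: measurable_itv.
Qed.

Lemma measurable_Qbox (beta : R) (j m : int) : measurable (Qbox beta j m).
Proof.
have -> : Qbox beta j m =
    `[dyadic_left beta j m, dyadic_left beta j m + dyadic_len R j[%classic
    `*` `]0, dyadic_len R j[%classic.
  by apply/seteqP; split => z /=; rewrite /Qbox /dyadic_int /= !in_itv.
by apply: measurableX => //; exact: measurable_itv.
Qed.

Lemma Qbox_sub_Hplane (beta : R) (j m : int) : Qbox beta j m `<=` @Hplane R.
Proof. by move=> z [_ /andP[]]. Qed.

End HalfPlane.

Section MaximalCubes.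
Context {R : realType} (beta : R).
Hypothesis beta3_int : exists e : int, 3 * beta = e%:~R.
Variable good : int * int -> Prop.

Definition maximal_good (N : int) (jm : int * int) : Prop :=
  [/\ jm.1 <= N, good jm &
      forall kn : int * int, jm.1 < kn.1 -> kn.1 <= N ->
        cube beta jm `<=` cube beta kn -> ~ good kn].

Lemma maximal_good_uniq [N : int] [jm kn : int * int] [z : R * R] :
  maximal_good N jm -> maximal_good N kn ->
  cube beta jm z -> cube beta kn z -> jm = kn.
Proof.
wlog le_jk : jm kn / jm.1 <= kn.1.
  move=> wlog_le; case: (lerP jm.1 kn.1) => [le_jk | lt_kj] mj mk zj zk.
    exact: wlog_le.
  by rewrite (wlog_le kn jm (ltW lt_kj)).
move=> [_ _ no_bigger] [kN gk _] zj zk.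
case: (ltgtP jm.1 kn.1) le_jk => // [lt_jk _ | eq_jk _].
  by case: (no_bigger kn lt_jk kN (Qbox_nested beta3_int (ltW lt_jk) zj zk)).
move: jm kn eq_jk zj zk {no_bigger kN gk} => [j m] [k n] /= <- [zm _] [zn _].
by rewrite (dyadic_int_uniq zm zn).
Qed.

Lemma maximal_good_cover [N : int] [jm : int * int] [z : R * R] :
  jm.1 <= N -> good jm -> cube beta jm z ->
  exists2 kn, maximal_good N kn & cube beta kn z.
Proof.
have [d] : exists d : nat, N - jm.1 <= d%:Z.
  by exists `|N - jm.1|%N; rewrite abszE ler_norm.
elim: d jm => [|d IH] jm dist jN gj zj;
  have [[kn [lt_jk kN sub gk]] | top] := pselect (exists kn : int * int,
    [/\ jm.1 < kn.1, kn.1 <= N, cube beta jm `<=` cube beta kn & good kn]);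
  [lia | | by apply: (IH kn) => //; [lia | exact: sub] | ];
  by exists jm => //; split => // kn ? ? ? ?; apply: top; exists kn.
Qed.

(* Indexed by nat through pickle so that countable additivity applies. *)
Definition maximal_cube_seq (N : int) (k : nat) : set (R * R) :=
  if pickle_inv k is Some jm then
    if `[< maximal_good N jm >] then cube beta jm else set0
  else set0.

Definition good_cubes_below (N : int) : set (R * R) :=
  [set z | exists2 jm, jm.1 <= N /\ good jm & cube beta jm z].

Lemma maximal_cube_seqP (N : int) (k : nat) :
  maximal_cube_seq N k = set0 \/
  exists2 jm, maximal_good N jm & maximal_cube_seq N k = cube beta jm.
Proof.
rewrite /maximal_cube_seq; case: pickle_inv => [jm|]; last by left.
by case: asboolP => [mj|_]; [right; exists jm | left].
Qed.

Lemma in_maximal_cube_seq (N : int) (k : nat) (z : R * R) :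
  maximal_cube_seq N k z <->
  exists2 jm, pickle_inv k = Some jm & maximal_good N jm /\ cube beta jm z.
Proof.
rewrite /maximal_cube_seq; case: pickle_inv => [jm|]; last by split => // -[].
by case: asboolP => [mj|nmj]; split => //; [exists jm | case=> _ [<-] [] ..].
Qed.

Lemma trivIset_maximal_cube_seq (N : int) : trivIset setT (maximal_cube_seq N).
Proof.
move=> k k' _ _ [z [/in_maximal_cube_seq[jm kjm [mj zj]]]].
move=> /in_maximal_cube_seq[jm' kjm' [mj' zj']].
have ejm := maximal_good_uniq mj mj' zj zj'; subst jm'.
by have := @pickle_invK (int * int)%type k; have := @pickle_invK (int * int)%type k';
  rewrite kjm kjm' /= => -> ->.
Qed.

Lemma bigcup_maximal_cube_seq (N : int) :
  \bigcup_k maximal_cube_seq N k = good_cubes_below N.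
Proof.
apply/seteqP; split => z.
  by move=> [k _ /in_maximal_cube_seq[jm _ [[jN gj _] zj]]]; exists jm.
move=> [jm [jN gj] zj]; have [kn mk zk] := maximal_good_cover jN gj zj.
exists (pickle kn); first by [].
by apply/in_maximal_cube_seq; exists kn; first exact: pickleK_inv.
Qed.

Lemma measurable_maximal_cube_seq (N : int) (k : nat) :
  measurable (maximal_cube_seq N k).
Proof.
case: (maximal_cube_seqP N k) => [-> | [jm _ ->]].
- exact: measurable0.
- exact: measurable_Qbox.
Qed.

Lemma maximal_cube_seq_sub_Hplane (N : int) (k : nat) :
  maximal_cube_seq N k `<=` @Hplane R.
Proof.
by case: (maximal_cube_seqP N k) => [-> | [jm _ ->]] //; exact: Qbox_sub_Hplane.
Qed.

Lemma good_cubes_below_sub_Hplane (N : int) : good_cubes_below N `<=` @Hplane R.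
Proof. by move=> z [jm _ /Qbox_sub_Hplane]. Qed.

Lemma measurable_good_cubes_below (N : int) : measurable (good_cubes_below N).
Proof.
rewrite -bigcup_maximal_cube_seq; apply: bigcupT_measurable => k.
exact: measurable_maximal_cube_seq.
Qed.

End MaximalCubes.

Section WeightedIntegral.
Context {R : realType} (alpha : R) {sigma : R * R -> R}.
Hypotheses (sigma_meas : measurable_fun (@Hplane R) sigma)
  (sigma_ge0 : forall z, Hplane z -> 0 <= sigma z).
Context {g : R * R -> R}.
Hypotheses (g_meas : measurable_fun (@Hplane R) g)
  (g_ge0 : forall z, Hplane z -> 0 <= g z).

Let density : R * R -> \bar R := fun z => (g z * sigma z * z.2 `^ alpha)%:E.

Let measurable_density (D : set (R * R)) :
  measurable D -> D `<=` @Hplane R -> measurable_fun D density.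
Proof.
move=> mD DH; apply: (measurable_funS measurable_Hplane DH).
apply/measurable_EFinP; apply: measurable_funM; first exact: measurable_funM.
apply: measurable_funTS.
exact: measurableT_comp (measurable_powR alpha) measurable_snd.
Qed.

Let density_ge0 (z : R * R) : Hplane z -> (0 <= density z)%E.
Proof.
by move=> Hz; rewrite lee_fin !mulr_ge0 ?g_ge0 ?sigma_ge0 ?powR_ge0.
Qed.

Lemma wint_ge0 [D : set (R * R)] : D `<=` @Hplane R -> (0 <= wint alpha sigma D g)%E.
Proof. by move=> DH; apply: integral_ge0 => z /DH; exact: density_ge0. Qed.

Lemma le_wint_subset (A B : set (R * R)) :
  measurable A -> measurable B -> A `<=` B -> B `<=` @Hplane R ->
  (wint alpha sigma A g <= wint alpha sigma B g)%E.
Proof.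
move=> mA mB AB BH; apply: ge0_subset_integral => //; first exact: measurable_density.
by move=> z /BH; exact: density_ge0.
Qed.

Lemma wint_bigcup (F : (set (R * R))^nat) :
  (forall k, measurable (F k)) -> \bigcup_k F k `<=` @Hplane R -> trivIset setT F ->
  wint alpha sigma (\bigcup_k F k) g = (\sum_(k <oo) wint alpha sigma (F k) g)%E.
Proof.
move=> mF FH tF; apply: ge0_integral_bigcup => //.
- by apply: measurable_density FH; exact: bigcupT_measurable.
- by move=> z /FH; exact: density_ge0.
Qed.

Lemma wint_nondecreasing_bigcup_le (E : (set (R * R))^nat) (b : \bar R) :
  nondecreasing_seq E -> (forall n, measurable (E n)) ->
  (forall n, E n `<=` @Hplane R) ->
  (forall n, wint alpha sigma (E n) g <= b)%E ->
  (wint alpha sigma (\bigcup_n E n) g <= b)%E.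
Proof.
move=> ndE mE EH Eb.
have cvgE : (wint alpha sigma (E n) g @[n --> \oo] -->
              wint alpha sigma (\bigcup_n E n) g)%E.
  apply: ge0_nondecreasing_set_cvg_integral => // [n | n z /EH].
  - exact: measurable_density.
  - exact: density_ge0.
rewrite -(cvg_lim _ cvgE) //; apply: lime_le; first exact: cvgP cvgE.
exact: nearW.
Qed.

End WeightedIntegral.

Lemma le_powR_of_avg_gt (R : realType) (m a a0 lam p : R) :
  0 < m -> 0 <= a <= a0 -> 0 < lam -> 1 <= p ->
  lam < a * m `^ (- p^-1) -> m <= (a0 / lam) `^ (p - 1) * (a / lam).
Proof.
move=> m0 /andP[a_ge0 le_a_a0] lam0 p1.
rewrite powRN ltr_pdivlMr ?powR_gt0 // => avg_gt.
have p0 : 0 < p by lra.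
have root_lt : m `^ p^-1 <= a / lam by rewrite ler_pdivlMr // mulrC ltW.
have -> : m = (m `^ p^-1) `^ p by rewrite -powRrM mulVf ?gt_eqF // powRr1 // ltW.
have a_lam_ge0 : 0 <= a / lam by rewrite divr_ge0 // ltW.
apply: (le_trans (ge0_ler_powR (ltW p0) _ _ root_lt)); rewrite ?nnegrE ?powR_ge0 //.
rewrite -mulr_powRB1 // mulrC ler_wpM2r // ge0_ler_powR ?nnegrE ?subr_ge0 //.
  exact: divr_ge0 (le_trans a_ge0 le_a_a0) (ltW lam0).
by rewrite ler_pM2r ?invr_gt0.
Qed.

Section LevelSet.
Variables (R : realType) (alpha gamma beta : R) (sigma f : R * R -> R).
Variables (lambda a0 : R).
Hypotheses (gamma_ge0 : 0 <= gamma) (gamma_lt : gamma < 2 + alpha)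
  (beta3_int : exists e : int, 3 * beta = e%:~R)
  (sigma_meas : measurable_fun (@Hplane R) sigma)
  (sigma_ge0 : forall z, Hplane z -> 0 <= sigma z)
  (f_meas : measurable_fun (@Hplane R) f) (lambda_gt0 : 0 < lambda)
  (wint_f : wint alpha sigma (@Hplane R) (fun z => `|f z|) = a0%:E).

Let p := (2 + alpha) / (2 + alpha - gamma).

Let p_ge1 : 1 <= p.
Proof. by rewrite /p ler_pdivlMr ?subr_gt0 // mul1r gerBl. Qed.

Let frac_exponent : 1 - gamma / (2 + alpha) = p^-1.
Proof.
rewrite /p invf_div; field.
by rewrite !gt_eqF ?subr_gt0 // (le_lt_trans gamma_ge0 gamma_lt).
Qed.

Let good (jm : int * int) : Prop :=
  (lambda%:E < frac_avg alpha gamma sigma f (cube beta jm))%E.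

Let absf_meas : measurable_fun (@Hplane R) (fun z => `|f z|).
Proof. exact: measurableT_comp. Qed.

Let absf_ge0 (z : R * R) : Hplane z -> 0 <= `|f z|.
Proof. by []. Qed.

Let one_ge0 (z : R * R) : Hplane z -> 0 <= 1 :> R.
Proof. by []. Qed.

Let a0_ge0 : 0 <= a0.
Proof. by rewrite -lee_fin -wint_f; exact: wint_ge0. Qed.

Lemma wmeas_good_cube_le (jm : int * int) : good jm ->
  (wmeas alpha sigma (cube beta jm) <=
   ((a0 / lambda) `^ (p - 1) / lambda)%:E *
   wint alpha sigma (cube beta jm) (fun z => `|f z|%R))%E.
Proof.
have QH := @Qbox_sub_Hplane _ beta jm.1 jm.2.
have mQ_ge0 : (0 <= wmeas alpha sigma (cube beta jm))%E :=
  wint_ge0 alpha sigma_ge0 one_ge0 QH.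
have aQ_ge0 := wint_ge0 alpha sigma_ge0 absf_ge0 QH.
have aQ_le : (wint alpha sigma (cube beta jm) (fun z => `|f z|%R) <= a0%:E)%E.
  rewrite -wint_f; apply: le_wint_subset => //.
  - exact: measurable_Qbox.
  - exact: measurable_Hplane.
rewrite /good /frac_avg /=.
have lambda_nlt0 : ~~ (lambda%:E < 0)%E by rewrite lte_fin ltNge (ltW lambda_gt0).
move: (wmeas _ _ _) mQ_ge0 => [m| |] //= m_ge0; last by rewrite (negbTE lambda_nlt0).
rewrite eqe; case: ifP => [_ | /norP[m_neq0 _]]; first by rewrite (negbTE lambda_nlt0).
move: (wint _ _ _ _) aQ_ge0 aQ_le => [a| |] // a_ge0 a_le.
rewrite -EFinM !lte_fin lee_fin frac_exponent mulrAC -mulrA => avg_gt.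
apply: le_powR_of_avg_gt => //; first by rewrite lt_def m_neq0 -lee_fin.
by rewrite -!lee_fin a_ge0.
Qed.

Lemma wmeas_good_cubes_below_le (N : int) :
  (wmeas alpha sigma (good_cubes_below beta good N) <= ((lambda^-1 * a0) `^ p)%:E)%E.
Proof.
set c := (a0 / lambda) `^ (p - 1) / lambda.
have c_ge0 : 0 <= c by rewrite divr_ge0 ?powR_ge0 // ltW.
have c_a0 : c * a0 = (lambda^-1 * a0) `^ p.
  have p_gt0 : 0 < p := lt_le_trans ltr01 p_ge1.
  rewrite /c -mulrA mulrC [a0 / lambda]mulrC mulr_powRB1 //.
  by rewrite mulr_ge0 // invr_ge0 ltW.
have mF := measurable_maximal_cube_seq beta good N.
have tF := trivIset_maximal_cube_seq beta beta3_int good N.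
have FH := maximal_cube_seq_sub_Hplane beta good N.
have UH : \bigcup_k maximal_cube_seq beta good N k `<=` @Hplane R.
  by rewrite bigcup_maximal_cube_seq; exact: good_cubes_below_sub_Hplane.
rewrite /wmeas -bigcup_maximal_cube_seq wint_bigcup //.
apply: (@le_trans _ _ (\sum_(k <oo) (c%:E * wint alpha sigma
                         (maximal_cube_seq beta good N k) (fun z => `|f z|%R)))%E).
  apply: lee_nneseries => [k _ _ | k _]; first exact: wint_ge0.
  case: (maximal_cube_seqP beta good N k) => [-> | [jm [_ gj _] ->]].
    by rewrite /wint !integral_set0 mule0.
  exact: wmeas_good_cube_le.
rewrite nneseriesZl; last by move=> k _; exact: wint_ge0.
rewrite -wint_bigcup //; apply: (@le_trans _ _ (c * a0)%:E); last by rewrite c_a0.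
rewrite [(c * a0)%:E]EFinM -wint_f; apply: lee_wpmul2l; first by rewrite lee_fin.
apply: le_wint_subset => //; [exact: bigcupT_measurable | exact: measurable_Hplane].
Qed.

Lemma level_set_bigcup :
  [set z | Hplane z /\ (lambda%:E < dyadic_max beta alpha gamma sigma f z)%E]
  = \bigcup_(N : nat) good_cubes_below beta good N%:Z.
Proof.
apply/seteqP; split => z.
  move=> [_ /ereal_sup_gt [_ [jm /= zj <-] gj]].
  by exists `|jm.1|%N => //; exists jm => //; rewrite abszE ler_norm.
move=> [N _ [jm [_ gj] zj]]; split; first exact: Qbox_sub_Hplane zj.
by apply: (lt_le_trans gj); apply: ereal_sup_ubound; exists jm.
Qed.

Lemma wmeas_level_set_le :
  (wmeas alpha sigma
     [set z | Hplane z /\ (lambda%:E < dyadic_max beta alpha gamma sigma f z)%E]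
   <= ((lambda^-1 * a0) `^ p)%:E)%E.
Proof.
rewrite level_set_bigcup; apply: wint_nondecreasing_bigcup_le => //.
- move=> n n' le_nn'; apply/subsetPset => z [jm [jN gj] zj].
  by exists jm => //; split => //; apply: le_trans jN _; rewrite lez_nat.
- by move=> N; exact: measurable_good_cubes_below.
- by move=> N; exact: good_cubes_below_sub_Hplane.
- by move=> N; exact: wmeas_good_cubes_below_le.
Qed.

End LevelSet.

Theorem proposition4p2 (R : realType) (alpha gamma beta : R)
  (sigma : R * R -> R) :
  -1 < alpha -> 0 <= gamma -> gamma < 2 + alpha ->
  (beta = 0 \/ beta = 1 / 3) ->
  weight sigma ->
  exists C : R, 0 < C /\
    forall (f : R * R -> R) (lambda : R),
      measurable_fun (@Hplane R) f -> 0 < lambda ->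
      (wmeas alpha sigma
         [set z | @Hplane R z /\ lambda%:E < dyadic_max beta alpha gamma sigma f z]
       <= C%:E * ((lambda^-1)%:E * wint alpha sigma (@Hplane R) (fun z => `|f z|%R))
                 `^ ((2 + alpha) / (2 + alpha - gamma)))%E.
Proof.
move=> _ gamma_ge0 gamma_lt beta_cases [sigma_meas sigma_ge0 _].
have beta3_int : exists e : int, 3 * beta = e%:~R.
  case: beta_cases => ->; first by exists 0; rewrite mulr0.
  by exists 1; rewrite mul1r mulfV ?pnatr_eq0.
exists 1; split => // f lambda f_meas lambda_gt0; rewrite mul1e.
have p_gt0 : 0 < (2 + alpha) / (2 + alpha - gamma) by apply: divr_gt0; lra.
have absf_ge0 (z : R * R) : Hplane z -> 0 <= `|f z| by [].
have := wint_ge0 alpha sigma_ge0 absf_ge0 (@subset_refl _ (@Hplane R)).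
case wint_f: (wint _ _ _ _) => [a0| |] // _.
  by rewrite -EFinM poweR_EFin; exact: wmeas_level_set_le.
by rewrite gt0_muley ?lte_fin ?invr_gt0 // poweRyr ?gt_eqF //; exact: leey.
Qed.
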